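(* Let $n=2m$ with $m$ a positive integer, and let $\mathbf{x}_n=(1,\dots,1)\in\mathbb{R}^n$. Then $$E(\mathbf{x}_n)\le m(1+\ln m),$$ where $E$ is as defined in the context.
   Context: For $\mathbf{x}=(x_1,\dots,x_n)\in(0,\infty)^n$, let $\mathcal{C}(\mathbf{x})$ be the configuration of $n+1$ points $P_1<\dots<P_{n+1}$ on $\mathbb{R}$ with $P_1=0$ and $P_{i+1}=P_i+x_i$, where $P_i$ is red if $i$ is odd and blue if $i$ is even. A matching $\mathcal{M}$ of this configuration is produced by the algorithm which repeatedly selects, among all pairs consisting of an unmatched blue point and an unmatched red point, a pair at minimum distance and matches them, until no further matching is possible; ties are broken at random. $D(\mathbf{x})$ is the expected value of $\sum_{P\text{ blue}}|P-\mathcal{M}(P)|$ with respect to the randomness of the algorithm. For a permutation $\pi$ of $\{1,\dots,n\}$ write $\pi(\mathbf{x})=(x_{\pi(1)},\dots,x_{\pi(n)})$, and $E(\mathbf{x})=\frac{1}{n!}\sum_\pi D(\pi(\mathbf{x}))$. *)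

From HB Require Import structures.
From mathcomp Require Import all_boot all_order all_algebra all_fingroup.
From mathcomp Require Import all_classical all_reals all_analysis.
Set Implicit Arguments. Unset Strict Implicit. Unset Printing Implicit Defensive.
Import Order.TTheory GRing.Theory Num.Theory.
Local Open Scope ring_scope.

Section Matching.
Variable R : realType.
Variable n : nat.

(* Points P_1 < ... < P_{n+1} are indexed 0-based by k : 'I_n.+1;
   P_{k+1} = x_1 + ... + x_k.  0-based index k is red iff k is even
   (i.e. 1-based index k+1 odd), blue iff k is odd. *)
Definition pos (x : 'I_n -> R) (k : 'I_n.+1) : R :=
  \sum_(i < n | (i < k)%N) x i.

Definition is_blue (k : 'I_n.+1) : bool := odd k.
Definition is_red (k : 'I_n.+1) : bool := ~~ odd k.

Definition pdist (x : 'I_n -> R) (p : 'I_n.+1 * 'I_n.+1) : R :=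
  `|pos x p.1 - pos x p.2|.

Definition cand (S : {set 'I_n.+1}) : {set 'I_n.+1 * 'I_n.+1} :=
  [set p | [&& p.1 \in S, p.2 \in S, is_blue p.1 & is_red p.2]].

Definition minpairs (x : 'I_n -> R) (S : {set 'I_n.+1}) :
  {set 'I_n.+1 * 'I_n.+1} :=
  [set p in cand S | [forall q in cand S, pdist x p <= pdist x q]].

(* Expected remaining cost of the greedy algorithm from the set S of
   unmatched points, ties broken uniformly at random; [fuel] bounds the
   number of remaining steps. *)
Fixpoint Dfuel (x : 'I_n -> R) (fuel : nat) (S : {set 'I_n.+1}) : R :=
  match fuel with
  | 0 => 0
  | f.+1 =>
    if #|minpairs x S| == 0%N then 0
    else (#|minpairs x S|%:R)^-1 *
         \sum_(p in minpairs x S) (pdist x p + Dfuel x f (S :\ p.1 :\ p.2))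
  end.

(* D(x): each step removes two points, so n.+1 steps always suffice. *)
Definition D (x : 'I_n -> R) : R := Dfuel x n.+1 [set: 'I_n.+1].

Definition E (x : 'I_n -> R) : R :=
  (n`!%:R)^-1 * \sum_(s : 'S_n) D (fun i => x (s i)).

End Matching.

From HB Require Import structures.
From mathcomp Require Import all_boot all_order all_algebra all_fingroup.
From mathcomp Require Import all_classical all_reals all_analysis.
From mathcomp Require Import zify ring lra.
Import Order.TTheory GRing.Theory Num.Theory.
Set Implicit Arguments. Unset Strict Implicit. Unset Printing Implicit Defensive.

(* For the all-ones vector the points are 0, 1, ..., n, and the unmatched
   points stay alternating: every blue has a red on each side of it and a red
   between it and any other blue.  A closest pair is then adjacent, so
   removing it keeps the configuration alternating.  If j blues remain and
   the current minimal distance is d, each blue owns the 2d unit segments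
   within distance d of it and no segment has two owners, so 2dj <= n.  The
   greedy step with j blues left thus costs at most n/(2j), whence
   D <= (n/2) H_m = m H_m for n = 2m, and H_m <= 1 + ln m.  All permutations
   of the all-ones vector coincide, so E = D. *)

Lemma interval_le_sum (F : nat -> bool) lo hi N : hi <= N ->
  (forall k, lo <= k < hi -> F k) -> hi - lo <= \sum_(0 <= k < N) F k.
Proof.
move=> hiN Fin; have [le_hilo|lt_lohi] := leqP hi lo.
  by move: le_hilo; rewrite -subn_eq0 => /eqP->.
have loN : lo <= N by rewrite (leq_trans (ltnW lt_lohi)).
apply: (@leq_trans (\sum_(lo <= k < hi) F k)).
  rewrite -[hi - lo]muln1 -sum_nat_const_nat big_nat_cond [X in _ <= X]big_nat_cond.
  by apply: leq_sum => k /andP[/Fin ->].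
rewrite (big_cat_nat (leq0n lo) loN) (big_cat_nat (ltnW lt_lohi) hiN) /=.
by rewrite addnCA leq_addr.
Qed.

Lemma card_odd_ord N : #|[set i : 'I_N | odd i]| = N./2.
Proof.
rewrite -sum1dep_card big_mkcond /=.
elim: N => [|N IH]; first by rewrite big_ord0.
by rewrite big_ord_recr /= IH uphalf_half addnC.
Qed.

Section Alternation.
Variable n : nat.
Implicit Types (S : {set 'I_n.+1}) (b c r : 'I_n.+1) (k lo hi : nat).

Definition blues S := [set b in S | odd b].

Definition has_red S lo hi : bool :=
  [exists r, [&& r \in S, ~~ odd r, lo <= r & r < hi]].

Definition blue_at S k : bool := [&& k <= n, odd k & inord k \in S].

(* 0 and n+1 serve as sentinel blues, so that [alternating] also asks for a
   red before the first and after the last blue. *)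
Definition fence S k : bool := [|| k == 0, k == n.+1 | blue_at S k].

Definition alternating S : Prop :=
  forall lo hi, lo < hi -> fence S lo -> fence S hi -> has_red S lo hi.

Definition closest_pair S b0 r0 : Prop :=
  (b0, r0) \in cand S /\ forall b r, (b, r) \in cand S -> `|b0 - r0| <= `|b - r|.

Lemma odd_neq_even (a b : nat) : odd a -> ~~ odd b -> a != b.
Proof. by move=> oa eb; apply/eqP => eq_ab; rewrite -eq_ab oa in eb. Qed.

Lemma in_cand S b r : ((b, r) \in cand S) = [&& b \in S, r \in S, odd b & ~~ odd r].
Proof. by rewrite inE. Qed.

Lemma has_redP S lo hi :
  reflect (exists r, [/\ r \in S, ~~ odd r & lo <= r < hi]) (has_red S lo hi).
Proof.
apply: (iffP existsP) => -[r].
  by case/and4P=> rS rr lor rhi; exists r; rewrite lor rhi.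
by case=> rS rr /andP[lor rhi]; exists r; rewrite rS rr lor rhi.
Qed.

Lemma blue_atE S b : blue_at S b = (b \in S) && odd b.
Proof. by rewrite /blue_at inord_val -ltnS ltn_ord /= andbC. Qed.

Lemma fence_blue S b : b \in S -> odd b -> fence S b.
Proof. by move=> bS ob; rewrite /fence blue_atE bS ob !orbT. Qed.

Lemma fence_subset S1 S2 k : S1 \subset S2 -> fence S1 k -> fence S2 k.
Proof.
move=> sub12; rewrite /fence /blue_at => /or3P[->|->|/and3P[kn ok kS]].
- by [].
- by rewrite orbT.
by rewrite kn ok (fintype.subsetP sub12 _ kS) !orbT.
Qed.

Lemma fenceP S k : fence S k ->
  [\/ k = 0, k = n.+1 | exists2 b, b \in blues S & k = b].
Proof.
rewrite /fence /blue_at => /or3P[/eqP->|/eqP->|/and3P[kn ok kS]].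
- by constructor 1.
- by constructor 2.
by constructor 3; exists (inord k); rewrite ?inE ?inordK ?kS.
Qed.

Lemma fence_le S k : fence S k -> k <= n.+1.
Proof. by case/fenceP => [->|->|[b _ ->]] //; apply: ltnW. Qed.

Lemma alternating_setT : ~~ odd n -> alternating [set: 'I_n.+1].
Proof.
move=> even_n lo hi lt_lohi /fenceP flo fhi.
have red_at k : k <= n -> ~~ odd k -> lo <= k < hi -> has_red [set: 'I_n.+1] lo hi.
  by move=> kn ek k_in; apply/has_redP; exists (inord k); rewrite inE inordK.
have hi_le := fence_le fhi; case: flo => [lo0|lo_n1|[b /setIdP[_ ob] lo_b]].
- by apply: (red_at 0) => //; lia.
- lia.
have even_b1 : ~~ odd b.+1 by rewrite /= ob.
have lt_bn := ltn_ord b; have neq_bn := odd_neq_even ob even_n.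
apply: (red_at b.+1 _ even_b1); first lia.
case/fenceP: fhi => [|hi_n1|[c /setIdP[_ oc] hi_c]]; [lia | lia |].
by have := odd_neq_even oc even_b1; lia.
Qed.

(* [b] owns the unit segment [k, k+1] when no red of [S] lies between them. *)
Definition owns S b k : bool := ~~ has_red S (minn b k.+1) (maxn b k.+1).

Section AlternatingSet.
Variable S : {set 'I_n.+1}.
Hypothesis altS : alternating S.

Lemma red_between_lt b c : b \in blues S -> c \in blues S -> b < c ->
  exists r, [/\ r \in S, ~~ odd r & b < r < c].
Proof.
move=> /setIdP[bS ob] /setIdP[cS oc] lt_bc.
have /has_redP[r [rS rr r_in]] := altS lt_bc (fence_blue bS ob) (fence_blue cS oc).
by exists r; split=> //; have := odd_neq_even ob rr; lia.
Qed.

Lemma owns_unique b c k : b \in blues S -> c \in blues S -> b < c ->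
  owns S b k -> ~~ owns S c k.
Proof.
move=> bB cB lt_bc; have [r [rS rr /andP[br rc]]] := red_between_lt bB cB lt_bc.
rewrite /owns negbK => own_b; apply/has_redP; exists r; split=> //.
case: (ltnP k r) => [kr|rk]; first lia.
by case/negP: own_b; apply/has_redP; exists r; split=> //; lia.
Qed.

Lemma owners_le1 k : #|[set b in blues S | owns S b k]| <= 1.
Proof.
apply/card_le1_eqP => b c /setIdP[bB own_b] /setIdP[cB own_c].
apply: val_inj; case: (ltngtP b c) => // [lt_bc|lt_cb].
  by have := owns_unique bB cB lt_bc own_b; rewrite own_c.
by have := owns_unique cB bB lt_cb own_c; rewrite own_b.
Qed.

Section ClosestPair.
Variables b0 r0 : 'I_n.+1.
Hypothesis cl : closest_pair S b0 r0.

Let b0S : b0 \in S. Proof. by case: cl => /[!in_cand] /and4P[]. Qed.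
Let r0S : r0 \in S. Proof. by case: cl => /[!in_cand] /and4P[]. Qed.
Let odd_b0 : odd b0. Proof. by case: cl => /[!in_cand] /and4P[]. Qed.
Let even_r0 : ~~ odd r0. Proof. by case: cl => /[!in_cand] /and4P[]. Qed.

Lemma closest_le b r : b \in S -> r \in S -> odd b -> ~~ odd r -> `|b0 - r0| <= `|b - r|.
Proof. by move=> bS rS ob rr; apply: cl.2; rewrite in_cand bS rS ob rr. Qed.

Lemma closest_pair_adjacent c : c \in S -> ~~ (minn b0 r0 < c < maxn b0 r0).
Proof.
move=> cS; apply/negP => btw; case oc: (odd c).
  have cB : c \in blues S by rewrite inE cS oc.
  have b0B : b0 \in blues S by rewrite inE b0S odd_b0.
  have [lt_b0c|lt_cb0|eq_b0c] := ltngtP b0 c; last lia.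
    have [r [rS rr ?]] := red_between_lt b0B cB lt_b0c.
    by have := closest_le b0S rS odd_b0 rr; lia.
  have [r [rS rr ?]] := red_between_lt cB b0B lt_cb0.
  by have := closest_le b0S rS odd_b0 rr; lia.
by have := closest_le b0S cS odd_b0 (negbT oc); lia.
Qed.

Lemma fence_matched k : fence (S :\ b0 :\ r0) k ->
  (b0 < r0 -> k <= r0 -> k < b0) /\ (r0 < b0 -> r0 < k -> b0 < k).
Proof.
case/fenceP => [->|->|[b /setIdP[/setD1P[_ /setD1P[neq_bb0 bS]] ob] ->]].
- by have := odd_gt0 odd_b0; lia.
- by have := ltn_ord b0; have := ltn_ord r0; lia.
have := closest_pair_adjacent bS; have := odd_neq_even ob even_r0.
by rewrite -val_eqE /= in neq_bb0; lia.
Qed.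

Lemma alternating_matched : alternating (S :\ b0 :\ r0).
Proof.
move=> lo hi lt_lohi flo fhi.
have sub : S :\ b0 :\ r0 \subset S := fintype.subset_trans (subD1set _ _) (subD1set _ _).
have red_matched r : r \in S -> ~~ odd r -> lo <= r < hi -> (r : nat) != r0 ->
    has_red (S :\ b0 :\ r0) lo hi.
  move=> rS rr rin neq_rr0; apply/has_redP; exists r; split=> //.
  by rewrite !inE -!val_eqE /= neq_rr0 rS eq_sym odd_neq_even.
have /has_redP[r [rS rr rin]] := altS lt_lohi (fence_subset sub flo) (fence_subset sub fhi).
have [eq_rr0|] := eqVneq (r : nat) r0; last exact: red_matched.
have [[lo_b0 _] [_ b0_hi]] := (fence_matched flo, fence_matched fhi).
have [lt_b0r0|lt_r0b0|] := ltngtP b0 r0; last by have := odd_neq_even odd_b0 even_r0; lia.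
  have lt_lob0 : lo < b0 by apply: lo_b0 => //; lia.
  have /has_redP[r' [r'S r'r r'in]] :=
    altS lt_lob0 (fence_subset sub flo) (fence_blue b0S odd_b0).
  by apply: (red_matched r') => //; lia.
have lt_b0hi : b0 < hi by apply: b0_hi => //; lia.
have /has_redP[r' [r'S r'r r'in]] :=
  altS lt_b0hi (fence_blue b0S odd_b0) (fence_subset sub fhi).
apply: (red_matched r') => //; first lia.
by have := odd_neq_even odd_b0 r'r; lia.
Qed.

Lemma blues_matched : blues (S :\ b0 :\ r0) = blues S :\ b0.
Proof.
apply/setP => b; rewrite !inE.
have [->|_] := eqVneq b r0; first by rewrite (negbTE even_r0) !andbF.
by rewrite /= -andbA.
Qed.

Lemma closest_window b : b \in blues S ->
  `|b0 - r0| <= b /\ b + `|b0 - r0| <= n.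
Proof.
case/setIdP=> bS ob; have fb := fence_blue bS ob.
have f0 : fence S 0 by rewrite /fence eqxx.
have fn : fence S n.+1 by rewrite /fence eqxx orbT.
have /has_redP[rl [rlS rlr lt_rlb]] := altS (odd_gt0 ob) f0 fb.
have /has_redP[rr [rrS rrr lt_brr]] := altS (ltn_ord b) fb fn.
have := closest_le bS rlS ob rlr; have := closest_le bS rrS ob rrr.
have := odd_neq_even ob rrr; have := ltn_ord rr; lia.
Qed.

Lemma owns_near b k : b \in blues S ->
  b - `|b0 - r0| <= k < b + `|b0 - r0| -> owns S b k.
Proof.
case/setIdP=> bS ob near_k; apply/has_redP => -[r [rS rr r_in]].
by have := closest_le bS rS ob rr; lia.
Qed.

Lemma closest_pair_gap : 2 * `|b0 - r0| * #|blues S| <= n.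
Proof.
set d := `|b0 - r0|.
have per_blue b : b \in blues S -> 2 * d <= \sum_(0 <= k < n) owns S b k.
  move=> bB; have [le_db le_bdn] := closest_window bB.
  have := interval_le_sum le_bdn (fun k => owns_near (k := k) bB); lia.
have per_point k : \sum_(b in blues S) owns S b k <= 1.
  by rewrite -big_mkcondr sum1dep_card; apply: owners_le1.
rewrite mulnC -sum_nat_const; apply: (leq_trans (leq_sum _ per_blue)).
rewrite exchange_big /=; apply: (leq_trans (leq_sum _ (fun k _ => per_point k))).
by rewrite sum_nat_const_nat subn0 muln1.
Qed.

End ClosestPair.
End AlternatingSet.
End Alternation.

Local Open Scope ring_scope.

Lemma mean_le (R : numFieldType) (T : finType) (A : {set T}) (F : T -> R) (c : R) :
  (0 < #|A|)%N -> (forall x, x \in A -> F x <= c) -> #|A|%:R^-1 * \sum_(x in A) F x <= c.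
Proof.
move=> A_gt0 le_Fc; rewrite ler_pdivrMl ?ltr0n // mulr_natl -sumr_const.
exact: ler_sum.
Qed.

Section GreedyOnOnes.
Variables (R : realType) (n : nat).
Let ones : 'I_n -> R := fun=> 1.

Lemma pos_ones k : pos ones k = (k : nat)%:R.
Proof.
rewrite /pos (eq_bigr (fun=> 1)) // -(big_ord_widen _ (fun=> 1)); last by rewrite -ltnS.
by rewrite sumr_const card_ord.
Qed.

Lemma pdist_ones p : pdist ones p = `|p.1 - p.2|%N%:R.
Proof. by rewrite /pdist !pos_ones natr_absz intr_norm rmorphB. Qed.

Lemma minpairs_closest S p : p \in minpairs ones S -> closest_pair S p.1 p.2.
Proof.
case: p => b r; rewrite inE => /andP[pc /forall_inP minimal]; split=> // b' r' qc.
by have := minimal _ qc; rewrite !pdist_ones ler_nat.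
Qed.

Lemma Dfuel_ones_le f S : alternating S ->
  Dfuel ones f S <= n%:R / 2 * series harmonic #|blues S|.
Proof.
have bound_ge0 j : 0 <= n%:R / 2 * series (@harmonic R) j.
  by rewrite mulr_ge0 // /series /= sumr_ge0 // => i _; apply: harmonic_ge0.
elim: f S => [|f IH] S altS /=; first exact: bound_ge0.
case: ifP => [_|/negbT minpairs_nz]; first exact: bound_ge0.
apply: mean_le; first by rewrite lt0n.
move=> [b0 r0] /minpairs_closest /= cl.
have [/[!in_cand] /and4P[b0S _ ob0 _] _] := cl.
have b0B : b0 \in blues S by rewrite inE b0S ob0.
have IHm := IH _ (alternating_matched altS cl); rewrite (blues_matched cl) in IHm.
have gap := closest_pair_gap altS cl.
have card_j : #|blues S| = #|blues S :\ b0|.+1 by rewrite (cardsD1 b0) b0B.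
rewrite card_j in gap *; rewrite pdist_ones seriesSr mulrDr [_ + Dfuel _ _ _]addrC.
apply: lerD; first exact: IHm.
rewrite /= -mulrA -invfM ler_pdivlMr ?mulr_gt0 ?ltr0n // -!natrM ler_nat.
by rewrite mulnCA mulnA.
Qed.

End GreedyOnOnes.

Lemma invS_le_lnS (R : realType) k : (0 < k)%N ->
  k.+1%:R^-1 <= ln (k.+1%:R : R) - ln k%:R.
Proof.
move=> k_gt0.
have : ln (1 - k.+1%:R^-1) <= - k.+1%:R^-1 :> R.
  apply: le_ln1Dx; rewrite ltrNl opprK invf_lt1 ?ltr0n // ltr1n; lia.
have -> : 1 - k.+1%:R^-1 = k%:R / k.+1%:R :> R by field.
by rewrite ln_div ?posrE ?ltr0n // => le_ln; rewrite -opprB lerNr.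
Qed.

Lemma harmonic_le_ln (R : realType) m : (0 < m)%N ->
  series harmonic m <= 1 + ln (m%:R : R).
Proof.
case: m => // m _; elim: m => [|m IH].
  by rewrite /series /= big_nat1 invr1 ln1 addr0.
rewrite seriesSr /=; apply: le_trans (lerD IH (invS_le_lnS R (ltn0Sn m))) _; lra.
Qed.

Lemma E_const (R : realType) n (c : R) : E (fun _ : 'I_n => c) = D (fun _ : 'I_n => c).
Proof.
rewrite /E (eq_bigr (fun=> D (fun _ : 'I_n => c))) // sumr_const card_Sn.
by rewrite -[D _ *+ _]mulr_natl mulKf // pnatr_eq0 -lt0n fact_gt0.
Qed.

Theorem lemmaA15 (R : realType) (m : nat) :
  (0 < m)%N ->
  E (n := (2 * m)%N) (fun _ : 'I_(2 * m) => (1 : R))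
    <= m%:R * (1 + ln (m%:R : R)).
Proof.
move=> m_gt0; rewrite E_const.
have altT : alternating [set: 'I_(2 * m).+1] by apply: alternating_setT; rewrite oddM.
have := Dfuel_ones_le R (2 * m).+1 altT.
have -> : #|blues [set: 'I_(2 * m).+1]| = m.
  rewrite (_ : blues _ = [set i : 'I_(2 * m).+1 | odd i]); last by apply/setP => i; rewrite !inE.
  by rewrite card_odd_ord mul2n /= uphalf_double.
rewrite natrM [2 * _ / 2]mulrAC divff ?mul1r // => /le_trans; apply.
by rewrite ler_wpM2l // harmonic_le_ln.
Qed.
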